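(* Let $G$ be a graph with $V(G)=\{v_1,\dots,v_n\}$, let $m\in\mathbb{N}$, let $d_1,\dots,d_n$ be nonnegative integers, and let $L$ be a list assignment for $G$ with $|L(v_i)|=m+d_i$ for each $i\in[n]$. Then \[P(G,L)\ge\left\lceil\frac{P_\ell(G,m)\prod_{i=1}^n(m+d_i)}{m^n}\right\rceil.\]
   Context: For a list assignment $L$ (a set $L(v)$ of colors for each vertex $v$), $P(G,L)$ is the number of proper colorings $f$ of $G$ with $f(v)\in L(v)$ for all $v$. An $m$-assignment has $|L(v)|=m$ for all $v$, and the list color function $P_\ell(G,m)$ is the minimum of $P(G,L)$ over all $m$-assignments $L$ for $G$. *)

From Stdlib Require Import ClassicalEpsilon.
From HB Require Import structures.
From mathcomp Require Import all_boot all_order all_algebra.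
From mathcomp Require Import finmap.
Set Implicit Arguments. Unset Strict Implicit. Unset Printing Implicit Defensive.
Import Order.TTheory GRing.Theory Num.Theory.
Local Open Scope fset_scope.

(* A simple graph on the finite vertex type T is a symmetric irreflexive
   relation g : rel T (the hypotheses are stated in the theorem). *)
Definition list_assignment (T : finType) := T -> {fset nat}.

Definition is_massign (T : finType) (L : list_assignment T) (m : nat) : Prop :=
  forall v, #|` L v| = m.

Definition colour_bound (T : finType) (L : list_assignment T) : nat :=
  \max_(v : T) \max_(c <- L v) c.+1.

(* proper L-colourings of g, with colours represented in 'I_(colour_bound L)
   (no loss: every admissible colour is < colour_bound L). *)
Definition proper_Lcolouring (T : finType) (g : rel T) (L : list_assignment T)
  (f : {ffun T -> 'I_(colour_bound L)}) : bool :=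
  [forall v, nat_of_ord (f v) \in L v] &&
  [forall u, forall v, g u v ==> (f u != f v)].
Arguments proper_Lcolouring {T} g L f.

Arguments colour_bound {T} L.
Definition P (T : finType) (g : rel T) (L : list_assignment T) : nat :=
  #|[set f : {ffun T -> 'I_(colour_bound L)} | proper_Lcolouring g L f]|.

Definition Pl_pred (T : finType) (g : rel T) (m : nat) : pred nat :=
  fun k => if excluded_middle_informative
                (exists L : list_assignment T, is_massign L m /\ P g L = k)
           then true else false.

Lemma Pl_pred_ex (T : finType) (g : rel T) (m : nat) :
  exists k, Pl_pred g m k.
Proof.
pose L : list_assignment T := fun _ => [fset i | i in iota 0 m].
exists (P g L); rewrite /Pl_pred.
case: excluded_middle_informative => // [[]]; exists L; split => // v.
by rewrite /L card_imfset //= undup_id ?iota_uniq // size_iota.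
Qed.

Definition Pl (T : finType) (g : rel T) (m : nat) : nat :=
  ex_minn (Pl_pred_ex g m).

(* Pick v with |L(v)| > m.  A proper L-colouring f stays proper after deleting
   a colour c from L(v) exactly when c <> f(v), so summing over c in L(v)
   gives sum_c P(G, L - c) = (|L(v)| - 1) P(G, L).  By induction on the total
   list size, each P(G, L - c) is at least P_l(G, m) prod_u |(L - c)(u)| / m^n;
   the common factor |L(v)| - 1 cancels, leaving
   P(G, L) m^n >= P_l(G, m) prod_u |L(u)|. *)
From HB Require Import structures.
From mathcomp Require Import all_boot all_order all_algebra.
From mathcomp Require Import finmap zify.
From Stdlib Require Import ClassicalEpsilon.
Import Order.TTheory GRing.Theory Num.Theory.
Set Implicit Arguments. Unset Strict Implicit. Unset Printing Implicit Defensive.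

Lemma sum_neq_uniq (A : eqType) (s : seq A) x :
  uniq s -> x \in s -> \sum_(y <- s) (x != y : nat) = (size s).-1.
Proof.
move=> s_uniq xs.
have -> : \sum_(y <- s) (x != y : nat) = count (predC (pred1 x)) s.
  rewrite -sum1_count [RHS]big_mkcond.
  by apply: eq_bigr => y _; rewrite /= eq_sym.
by have := count_predC (pred1 x) s; rewrite count_uniq_mem // xs add1n => <-.
Qed.

Section Colourings.

Variables (T : finType) (g : rel T).

Definition proper_colouring (L : list_assignment T) (N : nat)
    (f : {ffun T -> 'I_N}) : bool :=
  [forall v, nat_of_ord (f v) \in L v] &&
  [forall u, forall v, g u v ==> (f u != f v)].

Definition colourings (L : list_assignment T) (N : nat) :
    {set {ffun T -> 'I_N}} :=
  [set f | proper_colouring L f].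

Lemma proper_colouringE (L : list_assignment T) N N'
    (f : {ffun T -> 'I_N}) (f' : {ffun T -> 'I_N'}) :
  (forall v, f v = f' v :> nat) -> proper_colouring L f = proper_colouring L f'.
Proof.
move=> eq_ff'; congr andb; apply: eq_forallb => u; first by rewrite eq_ff'.
by apply: eq_forallb => v; rewrite -!(inj_eq val_inj) /= !eq_ff'.
Qed.

Lemma colour_bound_le (L : list_assignment T) N :
  (forall v c, c \in L v -> c < N) -> colour_bound L <= N.
Proof.
move=> ltN; apply/bigmax_leqP => v _.
by apply/bigmax_leqP_seq => c cL _; exact: ltN cL.
Qed.

Lemma lt_colour_bound (L : list_assignment T) v c :
  c \in L v -> c < colour_bound L.
Proof.
move=> cL; apply: leq_trans (leq_bigmax v).
exact: (@leq_bigmax_seq nat (enum_fset (L v)) predT succn c cL isT).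
Qed.

Lemma P_card_colourings (L : list_assignment T) N :
  (forall v c, c \in L v -> c < N) -> P g L = #|colourings L N|.
Proof.
move=> /colour_bound_le le_bN.
pose widen (f : {ffun T -> 'I_(colour_bound L)}) :=
  [ffun v => widen_ord le_bN (f v)].
have widen_inj : injective widen.
  move=> f1 f2 /ffunP eq12; apply/ffunP => v; apply/val_inj.
  by have := eq12 v; rewrite !ffunE => /(congr1 val).
change (P g L) with #|colourings L (colour_bound L)|.
rewrite -(card_imset _ widen_inj); apply: eq_card => f; rewrite inE.
apply/imsetP/idP => [[f0]|proper_f].
  rewrite inE => proper_f0 ->.
  by rewrite (proper_colouringE L (f' := f0)) // => v; rewrite ffunE.
have lt_fb v : f v < colour_bound L.
  by apply: (@lt_colour_bound _ v); case/andP: proper_f => /forallP.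
exists [ffun v => Ordinal (lt_fb v)].
  by rewrite inE (proper_colouringE L (f' := f)) // => v; rewrite ffunE.
by apply/ffunP => v; rewrite !ffunE; apply: val_inj.
Qed.

Definition remove_colour (L : list_assignment T) (v : T) (c : nat) :
    list_assignment T :=
  fun u => if u == v then (L v `\ c)%fset else L u.

Lemma mem_remove_colour (L : list_assignment T) v c u x :
  (x \in remove_colour L v c u) = (x \in L u) && ((u == v) ==> (x != c)).
Proof.
by rewrite /remove_colour; case: eqP => [->|_]; rewrite ?in_fsetD1 andbC ?andbT.
Qed.

Lemma colourings_remove_colour (L : list_assignment T) N v c :
  colourings (remove_colour L v c) N
  = [set f in colourings L N | f v != c :> nat].
Proof.
apply/setP => f; rewrite !inE /proper_colouring andbAC; congr andb.
apply/forallP/andP => [in_rem | [/forallP in_L fv_c] u].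
  split; last by have := in_rem v; rewrite mem_remove_colour eqxx => /andP[].
  by apply/forallP => u; have := in_rem u; rewrite mem_remove_colour => /andP[].
by rewrite mem_remove_colour in_L; apply/implyP => /eqP ->.
Qed.

Lemma card_colourings_remove_colour (L : list_assignment T) N v c :
  #|colourings (remove_colour L v c) N|
  = \sum_(f in colourings L N) (f v != c :> nat).
Proof.
rewrite colourings_remove_colour -sum1_card big_mkcond [RHS]big_mkcond.
by apply: eq_bigr => f _; rewrite inE; case: (f \in _).
Qed.

Lemma sum_card_colourings_remove_colour (L : list_assignment T) N v :
  \sum_(c <- L v) #|colourings (remove_colour L v c) N|
  = #|colourings L N| * (#|` L v| - 1).
Proof.
under eq_bigr do rewrite card_colourings_remove_colour.
rewrite exchange_big /= -sum_nat_const; apply: eq_bigr => f.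
by rewrite inE => /andP[/forallP fL _]; rewrite sum_neq_uniq ?fset_uniq ?subn1.
Qed.

Lemma sum_P_remove_colour (L : list_assignment T) v :
  \sum_(c <- L v) P g (remove_colour L v c) = P g L * (#|` L v| - 1).
Proof.
rewrite (@P_card_colourings L (colour_bound L)) => [|u c]; last first.
  exact: lt_colour_bound.
rewrite -sum_card_colourings_remove_colour; apply: eq_bigr => c _.
apply: P_card_colourings => u x; rewrite mem_remove_colour => /andP[xL _].
exact: lt_colour_bound xL.
Qed.

Lemma Pl_le (m : nat) (L : list_assignment T) :
  is_massign L m -> Pl g m <= P g L.
Proof.
move=> L_massign; rewrite /Pl; case: ex_minnP => k _; apply.
by rewrite /Pl_pred; case: excluded_middle_informative => // -[]; exists L.
Qed.

Lemma Pl_mul_prod_card_le (m : nat) (L : list_assignment T) :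
  0 < m -> (forall v, m <= #|` L v|) ->
  Pl g m * \prod_v #|` L v| <= P g L * m ^ #|T|.
Proof.
move=> m_gt0; have [n] := ubnP (\sum_v #|` L v|).
elim: n L => // n IH L lt_sum_n le_mL.
have [v lt_mLv | le_Lm] := pickP (fun v => m < #|` L v|); last first.
  have L_massign : is_massign L m.
    by move=> v; apply/eqP; rewrite eqn_leq le_mL andbT leqNgt le_Lm.
  rewrite (eq_bigr (fun=> m)) => [|v _]; last exact: L_massign.
  by rewrite prod_nat_const leq_mul2r Pl_le ?orbT.
set k := #|` L v| in lt_mLv *; set R := \prod_(u | u != v) #|` L u|.
have prod_L : \prod_u #|` L u| = k * R by rewrite (bigD1 v).
have IH_remove c : c \in L v ->
    Pl g m * ((k - 1) * R) <= P g (remove_colour L v c) * m ^ #|T|.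
  move=> cL; have card_rem u :
      #|` remove_colour L v c u| = if u == v then k - 1 else #|` L u|.
    rewrite /remove_colour /k; case: eqP => // _.
    by rewrite (cardfsD1 c (L v)) cL add1n subn1.
  have sum_rem : \sum_u #|` remove_colour L v c u|
                 = \sum_(u | u != v) #|` L u| + (k - 1).
    rewrite (bigD1 v) //= card_rem eqxx addnC; congr (_ + _).
    by apply: eq_bigr => u /negbTE uv; rewrite card_rem uv.
  have prod_rem : \prod_u #|` remove_colour L v c u| = (k - 1) * R.
    rewrite (bigD1 v) //= card_rem eqxx; congr (_ * _).
    by apply: eq_bigr => u /negbTE uv; rewrite card_rem uv.
  rewrite -prod_rem; apply: IH => [|u].
    move: lt_sum_n; rewrite (bigD1 v) //= sum_rem -/k.
    by set S := \sum_(u | _) _; lia.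
  by rewrite card_rem; case: eqP => _; [lia | apply: le_mL].
have sum_IH :
    \sum_(c <- L v) Pl g m * ((k - 1) * R) <= P g L * (k - 1) * m ^ #|T|.
  rewrite -sum_P_remove_colour big_distrl /= big_seq [leqRHS]big_seq.
  by apply: leq_sum => c; apply: IH_remove.
move: sum_IH; rewrite big_const_seq count_predT iter_addn_0 -/k => sum_IH.
have k1_gt0 : 0 < k - 1 by lia.
by rewrite -(leq_pmul2r k1_gt0) prod_L; nia.
Qed.

End Colourings.

Lemma ceil_divn_le (R : archiRealFieldType) (a b p : nat) :
  0 < b -> a <= p * b -> (Num.ceil (a%:R / b%:R : R) <= p%:Z)%R.
Proof.
move=> b_gt0 le_apb.
by rewrite ceil_le_int ler_pdivrMr ?ltr0n // -natrM ler_nat.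
Qed.

Theorem lemma25 (T : finType) (g : rel T)
  (g_sym : symmetric g) (g_irr : irreflexive g)
  (m : nat) (d : T -> nat) (L : list_assignment T)
  (HL : forall v, #|` L v|%fset = (m + d v)%N) :
  (Num.ceil (((Pl g m * \prod_(v : T) (m + d v))%N)%:R
              / ((m ^ #|T|)%N)%:R : rat) <= (P g L)%:Z)%R.
Proof.
have prod_card : \prod_v (m + d v) = \prod_v #|` L v| by apply: eq_bigr => v _.
have [m0 | m_gt0] := posnP m; last first.
  apply: ceil_divn_le; first by rewrite expn_gt0 m_gt0.
  by rewrite prod_card Pl_mul_prod_card_le // => v; rewrite HL leq_addr.
(* For m = 0 and n > 0 the bound divides by 0, and x / 0 = 0 in rat. *)
have [T0 | T_gt0] := posnP #|T|; last by rewrite m0 exp0n // invr0 mulr0 ceil0.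
have no_vertex (v : T) : False by have := card0_eq T0 v; rewrite inE.
apply: ceil_divn_le; first by rewrite T0.
rewrite T0 muln1 big_pred0 => [|v]; last by case: (no_vertex v).
by rewrite muln1 Pl_le // => v; case: (no_vertex v).
Qed.
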